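(* Let $D([0,1],\mathbb{C})$ be the space of càdlàg functions from $[0,1]$ to $\mathbb{C}$. Suppose $f_n\in D([0,1],\mathbb{C})$ converge uniformly to $f\in C([0,1],\mathbb{C})$. Then for every fixed $z\in\mathbb{C}$ with $|z|=1$ and $z\neq1$, $$\lim_{n\to\infty}\int_0^1f_n(t)\,z^{\lfloor nt\rfloor}\,dt=0.$$ *)

From Stdlib Require Import Reals ZArith.
From Coquelicot Require Import Coquelicot.
Open Scope R_scope.

(* A function f : R -> C, considered on [0,1].  Only its values on [0,1] matter. *)

Definition cadlag01 (f : R -> C) : Prop :=
  (forall t, 0 <= t < 1 -> filterlim f (at_right t) (locally (f t))) /\
  (forall t, 0 < t <= 1 -> exists l : C, filterlim f (at_left t) (locally l)).

Definition continuous01 (f : R -> C) : Prop :=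
  forall t, 0 <= t <= 1 ->
    filterlim f (within (fun s => 0 <= s <= 1) (locally t)) (locally (f t)).

Definition unif_conv01 (fn : nat -> R -> C) (f : R -> C) : Prop :=
  forall eps : R, 0 < eps -> exists N : nat, forall n : nat, (N <= n)%nat ->
    forall t, 0 <= t <= 1 -> Cmod (fn n t - f t)%C < eps.

(* floor(n t) as a natural number (t >= 0 in all uses); Int_part is the floor. *)
Definition floor_nat (x : R) : nat := Z.to_nat (Int_part x).

Definition integrand (fn : nat -> R -> C) (z : C) (n : nat) (t : R) : C :=
  (fn n t * pow_n z (floor_nat (INR n * t)))%C.

(* Put d = 1/n and L_n = \int_0^1 f_n(t) z^{floor(nt)} dt.  Since floor(n(t+d)) = floor(nt) + 1,
   translating the integrand by d multiplies it by z, hence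
     (z - 1) L_n = \int_d^1 (f_n(s-d) - f_n(s)) z^{floor(ns)} ds
                   + \int_1^{1+d} f_n(s-d) z^{floor(ns)} ds - \int_0^d f_n(t) z^{floor(nt)} dt.
   A uniform limit of a continuous function is eventually uniformly bounded and
   equicontinuous, so the first integral is small and the two others are O(1/n);
   as z <> 1 this forces L_n -> 0. *)

From Stdlib Require Import Reals ZArith Lia Lra Classical_Prop.
From Coquelicot Require Import Coquelicot.
Open Scope R_scope.

Lemma RInt_not_ex (f : R -> C) (a b : R) :
  ~ ex_RInt (V := C_R_CompleteNormedModule) f a b ->
  RInt (V := C_R_CompleteNormedModule) f a b = RtoC 0.
Proof.
  intros Hn.
  assert (lub_full : forall E : R -> Prop, (forall x, E x) -> real (Lub_Rbar E) = 0).
  { intros E HE. rewrite (is_lub_Rbar_unique E p_infty); [reflexivity|].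
    split; [intros x _; exact I|].
    intros [r| |] Hb; simpl; auto.
    - specialize (Hb (r + 1) (HE _)). simpl in Hb. lra.
    - exact (Hb 0 (HE _)). }
  unfold RInt, iota.
  change (C_complete_lim (fun A : C -> Prop => forall x, is_RInt f a b x -> A x) = RtoC 0).
  unfold C_complete_lim, R_complete_lim.
  rewrite !lub_full; [reflexivity| |]; intros x y Hy; exfalso; apply Hn; exists y; exact Hy.
Qed.

Lemma Cmod_pow_n (z : C) (k : nat) : Cmod z = 1 -> Cmod (pow_n z k) = 1.
Proof.
  intros Hz; induction k as [|k IH]; simpl.
  - apply Cmod_1.
  - change (Cmod (z * pow_n z k)%C = 1). rewrite Cmod_mult, Hz, IH. ring.
Qed.

Lemma Cmod_mult_le (u v : C) (M : R) : Cmod u <= M -> Cmod v <= 1 -> Cmod (u * v) <= M.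
Proof.
  intros Hu Hv. rewrite Cmod_mult.
  pose proof (Cmod_ge_0 u). pose proof (Cmod_ge_0 v). nra.
Qed.

Lemma floor_nat_add1 (x : R) : 0 <= x -> floor_nat (x + 1) = S (floor_nat x).
Proof.
  intros Hx. unfold floor_nat.
  destruct (base_Int_part x) as [H1 H2].
  assert (Hp : (0 <= Int_part x)%Z).
  { assert (Hlt : (-1 < Int_part x)%Z) by (apply lt_IZR; simpl; lra). lia. }
  assert (E : Int_part (x + 1) = (Int_part x + 1)%Z).
  { symmetry. apply Int_part_spec. rewrite plus_IZR. simpl. lra. }
  rewrite E, Z2Nat.inj_add by lia. simpl. lia.
Qed.

Lemma pow_floor_nat_shift (z : C) (n : nat) (t : R) : 0 < INR n -> 0 <= t ->
  pow_n z (floor_nat (INR n * (t + / INR n))) = (z * pow_n z (floor_nat (INR n * t)))%C.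
Proof.
  intros Hn Ht.
  replace (INR n * (t + / INR n)) with (INR n * t + 1) by (field; lra).
  rewrite floor_nat_add1 by nra. reflexivity.
Qed.

Lemma is_RInt_Cmult (g : R -> C) (z : C) (a b : R) (l : C) :
  is_RInt (V := C_R_NormedModule) g a b l ->
  is_RInt (V := C_R_NormedModule) (fun t => (z * g t)%C) a b (z * l)%C.
Proof.
  intros H.
  change (is_RInt (V := prod_NormedModule R_AbsRing R_NormedModule R_NormedModule) g a b l) in H.
  pose proof (is_RInt_fct_extend_fst _ _ _ _ H) as Hre.
  pose proof (is_RInt_fct_extend_snd _ _ _ _ H) as Him.
  change (is_RInt (V := prod_NormedModule R_AbsRing R_NormedModule R_NormedModule)
            (fun t => (z * g t)%C) a b (z * l)%C).
  destruct z as [x y], l as [l1 l2].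
  apply is_RInt_fct_extend_pair; simpl.
  - exact (is_RInt_minus _ _ _ _ _ _ (is_RInt_scal _ _ _ x _ Hre) (is_RInt_scal _ _ _ y _ Him)).
  - exact (is_RInt_plus _ _ _ _ _ _ (is_RInt_scal _ _ _ x _ Him) (is_RInt_scal _ _ _ y _ Hre)).
Qed.

Lemma is_RInt_translate {V : NormedModule R_AbsRing} (f : R -> V) (a b d : R) (l : V) :
  is_RInt (fun t => f (t + d)) a b l -> is_RInt f (a + d) (b + d) l.
Proof.
  intros H.
  apply (is_RInt_ext (fun y => scal 1 (f (1 * y + - d + d)))).
  - intros x _. replace (1 * x + - d + d) with x by ring. exact (scal_one _).
  - apply (is_RInt_comp_lin (fun t => f (t + d)) 1 (- d)).
    replace (1 * (a + d) + - d) with a by ring.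
    replace (1 * (b + d) + - d) with b by ring.
    exact H.
Qed.

Section Shift.

Variables (g h : R -> C) (z : C) (d : R) (L : C).
Hypothesis d_bounds : 0 < d < 1.
Hypothesis gh_int : is_RInt (V := C_R_NormedModule) (fun t => (g t * h t)%C) 0 1 L.
Hypothesis h_shift : forall t, 0 <= t <= 1 -> h (t + d) = (z * h t)%C.

Let G (s : R) : C := (g (s - d) * h s)%C.

Lemma is_RInt_shifted : is_RInt (V := C_R_NormedModule) G d (1 + d) (z * L)%C.
Proof.
  replace d with (0 + d) at 1 by ring. apply is_RInt_translate.
  eapply is_RInt_ext; [| exact (is_RInt_Cmult _ z _ _ _ gh_int)].
  intros t Ht. rewrite Rmin_left, Rmax_right in Ht by lra.
  unfold G. rewrite h_shift by lra. replace (t + d - d) with t by ring.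
  change ((z * (g t * h t))%C = (g t * (z * h t))%C). ring.
Qed.

Lemma Cmod_RInt_shift_le (w M : R) :
  (forall s, d <= s <= 1 -> Cmod (g (s - d) - g s) <= w) ->
  (forall t, 0 <= t <= 1 -> Cmod (g t) <= M) ->
  (forall t, 0 <= t <= 1 + d -> Cmod (h t) <= 1) ->
  Cmod (z - 1) * Cmod L <= w + 2 * d * M.
Proof.
  intros Hw HM Hh.
  destruct (ex_RInt_Chasles_1 (V := C_R_CompleteNormedModule) (fun t => (g t * h t)%C) 0 d 1)
    as [B HB]; [lra | exists L; exact gh_int|].
  destruct (ex_RInt_Chasles_2 (V := C_R_CompleteNormedModule) G d 1 (1 + d))
    as [A HA]; [lra | exists (z * L)%C; exact is_RInt_shifted|].
  pose proof (is_RInt_Chasles_2 _ 0 d 1 _ _ d_bounds gh_int HB)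
    as Hmid.
  pose proof (is_RInt_Chasles_1 _ d 1 (1 + d) _ _ ltac:(lra) is_RInt_shifted HA) as HGmid.
  pose proof (is_RInt_minus _ _ _ _ _ _ HGmid Hmid) as Hdiff.
  assert (Hgap : forall s, d <= s <= 1 ->
    @norm R_AbsRing C_R_NormedModule (G s - g s * h s)%C <= w).
  { intros s Hs. rewrite <- Cmod_norm. unfold G.
    replace (g (s - d) * h s - g s * h s)%C with ((g (s - d) - g s) * h s)%C by ring.
    apply Cmod_mult_le; [apply Hw | apply Hh]; lra. }
  assert (Htail : forall s, 1 <= s <= 1 + d -> @norm R_AbsRing C_R_NormedModule (G s) <= M).
  { intros s Hs. rewrite <- Cmod_norm. apply Cmod_mult_le; [apply HM | apply Hh]; lra. }
  assert (Hhead : forall t, 0 <= t <= d -> @norm R_AbsRing C_R_NormedModule (g t * h t)%C <= M).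
  { intros t Ht. rewrite <- Cmod_norm. apply Cmod_mult_le; [apply HM | apply Hh]; lra. }
  pose proof (norm_RInt_le_const _ d 1 _ _ ltac:(lra) Hgap Hdiff) as Bdiff.
  pose proof (norm_RInt_le_const _ 1 (1 + d) _ _ ltac:(lra) Htail HA) as Btail.
  pose proof (norm_RInt_le_const _ 0 d _ _ ltac:(lra) Hhead HB) as Bhead.
  rewrite <- !Cmod_norm in Bdiff, Btail, Bhead.
  change (minus (minus (z * L)%C A) (minus L B)) with ((z * L - A) - (L - B))%C in Bdiff.
  assert (Hw0 : 0 <= w) by (eapply Rle_trans; [apply Cmod_ge_0 | apply (Hw 1); lra]).
  rewrite <- Cmod_mult.
  replace ((z - 1) * L)%C with (((z * L - A) - (L - B)) + A - B)%C by ring.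
  unfold Cminus at 1. eapply Rle_trans; [apply Cmod_triangle|]. rewrite Cmod_opp.
  eapply Rle_trans; [apply Rplus_le_compat_r, Cmod_triangle|].
  nra.
Qed.

End Shift.

Definition clamp01 (x : R) : R := Rmax 0 (Rmin 1 x).

Lemma clamp01_in (x : R) : 0 <= clamp01 x <= 1.
Proof. unfold clamp01, Rmax, Rmin; repeat destruct Rle_dec; lra. Qed.

Lemma clamp01_id (x : R) : 0 <= x <= 1 -> clamp01 x = x.
Proof. intros; unfold clamp01, Rmax, Rmin; repeat destruct Rle_dec; lra. Qed.

Lemma clamp01_lipschitz (x y : R) : Rabs (clamp01 y - clamp01 x) <= Rabs (y - x).
Proof.
  unfold clamp01, Rmax, Rmin; repeat destruct Rle_dec;
    unfold Rabs; repeat destruct Rcase_abs; lra.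
Qed.

(* Extending f by constants outside [0,1] turns relative continuity into plain continuity. *)
Lemma continuous01_clamp (f : R -> C) : continuous01 f ->
  forall x, 0 <= x <= 1 -> filterlim (fun y => f (clamp01 y)) (locally x) (locally (f x)).
Proof.
  intros Hc x Hx.
  eapply filterlim_comp; [| apply (Hc x Hx)].
  intros A [e He]. exists e. intros y Hy. apply He; [| apply clamp01_in].
  pose proof (clamp01_lipschitz x y) as Hl. rewrite (clamp01_id x Hx) in Hl.
  unfold ball in *; simpl in *; unfold AbsRing_ball, abs, minus, plus, opp in *; simpl in *.
  unfold Rminus in Hl. lra.
Qed.

Lemma continuous01_unif (f : R -> C) : continuous01 f ->
  forall eps, 0 < eps -> exists delta, 0 < delta /\
    forall s t, 0 <= s <= 1 -> 0 <= t <= 1 -> Rabs (s - t) < delta ->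
      Cmod (f s - f t)%C < eps.
Proof.
  intros Hc eps Heps.
  assert (Hcont : forall x, 0 <= x <= 1 ->
    @continuous R_UniformSpace C_UniformSpace (fun y => f (clamp01 y)) x).
  { intros x Hx. unfold continuous. rewrite (clamp01_id x Hx).
    exact (continuous01_clamp f Hc x Hx). }
  destruct (@unifcont_normed_1d R_AbsRing C_R_NormedModule _ 0 1 Hcont (mkposreal eps Heps))
    as [d Hd].
  exists d. split; [apply cond_pos|]. intros s t Hs Ht Hst.
  specialize (Hd t s Ht Hs). rewrite (clamp01_id s Hs), (clamp01_id t Ht) in Hd.
  rewrite Cmod_norm. apply Hd. exact Hst.
Qed.

Lemma continuous01_bounded (f : R -> C) : continuous01 f ->
  exists M, 0 < M /\ forall t, 0 <= t <= 1 -> Cmod (f t) <= M.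
Proof.
  intros Hc.
  destruct (@bounded_continuity R_AbsRing C_R_NormedModule (fun y => f (clamp01 y)) 0 1)
    as [M HM].
  { intros x Hx. rewrite (clamp01_id x Hx). exact (continuous01_clamp f Hc x Hx). }
  exists (Rmax M 1). split; [pose proof (Rmax_r M 1); lra|].
  intros t Ht. specialize (HM t Ht). rewrite (clamp01_id t Ht), <- Cmod_norm in HM.
  pose proof (Rmax_l M 1). lra.
Qed.

Section UniformLimit.

Variables (fn : nat -> R -> C) (f : R -> C).
Hypotheses (f_cont : continuous01 f) (fn_unif : unif_conv01 fn f).

Lemma unif_conv01_equicont (eps : R) : 0 < eps -> exists delta, 0 < delta /\
  eventually (fun n => forall s t, 0 <= s <= 1 -> 0 <= t <= 1 -> Rabs (s - t) < delta ->
    Cmod (fn n s - fn n t)%C <= eps).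
Proof.
  intros Heps.
  destruct (continuous01_unif f f_cont (eps / 3)) as [delta [Hdelta Hf]]; [lra|].
  destruct (fn_unif (eps / 3)) as [N HN]; [lra|].
  exists delta. split; [exact Hdelta|]. exists N. intros n Hn s t Hs Ht Hst.
  replace (fn n s - fn n t)%C with ((fn n s - f s) + (f s - f t) - (fn n t - f t))%C by ring.
  unfold Cminus at 1. eapply Rle_trans; [apply Cmod_triangle|]. rewrite Cmod_opp.
  eapply Rle_trans; [apply Rplus_le_compat_r, Cmod_triangle|].
  pose proof (HN n Hn s Hs). pose proof (HN n Hn t Ht). pose proof (Hf s t Hs Ht Hst). lra.
Qed.

Lemma unif_conv01_bounded : exists M, 0 < M /\
  eventually (fun n => forall t, 0 <= t <= 1 -> Cmod (fn n t) <= M).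
Proof.
  destruct (continuous01_bounded f f_cont) as [M [HM Hf]].
  destruct (fn_unif 1) as [N HN]; [lra|].
  exists (M + 1). split; [lra|]. exists N. intros n Hn t Ht.
  replace (fn n t) with ((fn n t - f t) + f t)%C by ring.
  eapply Rle_trans; [apply Cmod_triangle|].
  pose proof (HN n Hn t Ht). pose proof (Hf t Ht). lra.
Qed.

End UniformLimit.

Lemma eventually_inv_INR_lt (a : R) : 0 < a ->
  eventually (fun n : nat => 0 < INR n /\ / INR n < a).
Proof.
  intros Ha. destruct (INR_unbounded (/ a)) as [N HN].
  exists N. intros n Hn.
  assert (HNn : INR N <= INR n) by (apply le_INR; exact Hn).
  assert (Hpos : 0 < INR n) by (pose proof (Rinv_0_lt_compat a Ha); lra).
  split; [exact Hpos|].
  assert (Hinv : / a < INR n) by lra.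
  rewrite <- (Rinv_inv a). apply Rinv_lt_contravar; [|exact Hinv].
  apply Rmult_lt_0_compat; [apply Rinv_0_lt_compat|]; lra.
Qed.

Lemma Cmod_RInt_integrand_le (fn : nat -> R -> C) (z : C) (n : nat) (w M : R) :
  Cmod z = 1 -> 1 < INR n ->
  (forall s, / INR n <= s <= 1 -> Cmod (fn n (s - / INR n) - fn n s) <= w) ->
  (forall t, 0 <= t <= 1 -> Cmod (fn n t) <= M) ->
  Cmod (z - 1) * Cmod (RInt (V := C_R_CompleteNormedModule) (integrand fn z n) 0 1)
    <= w + 2 * / INR n * M.
Proof.
  intros Hz Hn Hw HM.
  assert (Hd : 0 < / INR n < 1).
  { split; [apply Rinv_0_lt_compat; lra|]. rewrite <- Rinv_1. apply Rinv_lt_contravar; lra. }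
  destruct (classic (ex_RInt (V := C_R_CompleteNormedModule) (integrand fn z n) 0 1))
    as [Hex | Hnex].
  - apply (Cmod_RInt_shift_le (fn n) (fun t => pow_n z (floor_nat (INR n * t))) z (/ INR n));
      [exact Hd | exact (RInt_correct _ _ _ Hex) | | exact Hw | exact HM |].
    + intros t Ht. apply pow_floor_nat_shift; lra.
    + intros t _. rewrite Cmod_pow_n by exact Hz. lra.
  - rewrite RInt_not_ex, Cmod_0, Rmult_0_r by exact Hnex.
    pose proof (Rle_trans _ _ _ (Cmod_ge_0 _) (Hw 1 ltac:(lra))).
    pose proof (Rle_trans _ _ _ (Cmod_ge_0 _) (HM 0 ltac:(lra))).
    nra.
Qed.

Theorem theorem13 (fn : nat -> R -> C) (f : R -> C) (z : C) :
  (forall n, cadlag01 (fn n)) ->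
  continuous01 f ->
  unif_conv01 fn f ->
  Cmod z = 1 -> z <> RtoC 1 ->
  filterlim (fun n : nat => RInt (V := C_R_CompleteNormedModule) (integrand fn z n) 0 1)
    eventually (locally (RtoC 0)).
Proof.
  intros _ Hf Hu Hz Hz1.
  assert (Hc : 0 < Cmod (z - 1)).
  { apply Cmod_gt_0. intros E. apply Hz1. replace z with ((z - 1) + 1)%C by ring.
    rewrite E. ring. }
  set (c := Cmod (z - 1)) in Hc.
  apply filterlim_locally. intros eps. pose proof (cond_pos eps) as Heps.
  destruct (unif_conv01_equicont fn f Hf Hu (c * eps / 2)) as [delta [Hdelta Hequi]]; [nra|].
  destruct (unif_conv01_bounded fn f Hf Hu) as [M [HM Hbound]].
  set (a := Rmin (Rmin delta 1) (c * eps / (4 * M))).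
  assert (Ha : 0 < a) by (repeat apply Rmin_pos; try apply Rdiv_lt_0_compat; nra).
  generalize (filter_and _ _ Hequi (filter_and _ _ Hbound (eventually_inv_INR_lt _ Ha))).
  apply filter_imp. intros n [Hw [HMn [Hn Hd]]].
  apply (@norm_compat1 R_AbsRing C_R_NormedModule).
  rewrite (@minus_zero_r (NormedModule.AbelianGroup R_AbsRing C_R_NormedModule)), <- Cmod_norm.
  assert (Hsmall : / INR n < delta /\ / INR n < 1 /\ / INR n < c * eps / (4 * M)).
  { unfold a in Hd.
    pose proof (Rmin_l (Rmin delta 1) (c * eps / (4 * M))). pose proof (Rmin_l delta 1).
    pose proof (Rmin_r (Rmin delta 1) (c * eps / (4 * M))). pose proof (Rmin_r delta 1). lra. }
  destruct Hsmall as [Hd1 [Hd2 Hd3]].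
  assert (HdM : / INR n * M < c * eps / 4).
  { replace (c * eps / 4) with (c * eps / (4 * M) * M) by (field; lra). nra. }
  assert (Hn1 : 1 < INR n).
  { rewrite <- (Rinv_inv (INR n)), <- Rinv_1. apply Rinv_lt_contravar; [|exact Hd2].
    apply Rmult_lt_0_compat; [apply Rinv_0_lt_compat; exact Hn | lra]. }
  apply (Rmult_lt_reg_l c); [exact Hc|].
  eapply Rle_lt_trans; [apply (Cmod_RInt_integrand_le fn z n (c * eps / 2) M Hz Hn1)|]; [| | nra].
  - intros s Hs. pose proof (Rinv_0_lt_compat _ Hn).
    apply Hw; [| | rewrite Rabs_left1]; lra.
  - exact HMn.
Qed.
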